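(* Let $n\ge4$ and let $\lambda=(a_1,\dots,a_n)$ (usual coordinates) be a dominant weight of $SL(n)$ such that all $a_i\notin\mathbb Z$ and $|a_i|>1$ for some $i$. If $M(\lambda)$ contains no point three of whose coordinates equal $\alpha+1,\alpha,\alpha-1$ for some $\alpha\in\mathbb R$, then $$\lambda=\Big(\tfrac{2n-2}{n},-\tfrac2n,\dots,-\tfrac2n\Big)\quad\text{or}\quad \lambda=\Big(\tfrac2n,\dots,\tfrac2n,-\tfrac{2n-2}{n}\Big).$$
   Context: Setup for $SL(n)$: $\varepsilon_1,\dots,\varepsilon_n$ is the standard basis of $\mathbb Q^n$, $e_i=\varepsilon_i-\frac1n(1,\dots,1)$; the character lattice $\mathfrak X(T)$ of the diagonal torus is identified with the $\mathbb Z$-span of $e_1,\dots,e_n$ inside $\{y\in\mathbb Q^n:\sum y_i=0\}$ (the $y_i$ are the ''usual coordinates''). $W=S_n$ acts by permuting coordinates. A weight is dominant if $y_1\ge y_2\ge\dots\ge y_n$. The root lattice is $\Phi=\{\sum a_ie_i\mid a_i\in\mathbb Z,\ \sum a_i\equiv0\pmod n\}$. For a dominant weight $\lambda$, $M(\lambda)=\mathrm{conv}\{w\lambda\mid w\in W\}\cap(\lambda+\Phi)$. *)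

From HB Require Import structures.
From mathcomp Require Import all_boot all_order all_fingroup all_algebra.
Set Implicit Arguments. Unset Strict Implicit. Unset Printing Implicit Defensive.
Import Order.TTheory GRing.Theory Num.Theory.
Local Open Scope ring_scope.

Definition ebasis (n : nat) (i : 'I_n) : 'rV[rat]_n :=
  \row_(j < n) ((i == j)%:R - (n%:R)^-1).

Definition is_weight (n : nat) (y : 'rV[rat]_n) : Prop :=
  exists b : 'I_n -> int, y = \sum_(i < n) (b i)%:~R *: ebasis i.

Definition dominant (n : nat) (y : 'rV[rat]_n) : Prop :=
  forall i j : 'I_n, (i <= j)%N -> y ord0 j <= y ord0 i.

Definition in_root_lattice (n : nat) (y : 'rV[rat]_n) : Prop :=
  exists a : 'I_n -> int, (n%:Z %| \sum_(i < n) a i)%Z /\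
    y = \sum_(i < n) (a i)%:~R *: ebasis i.

Definition Wact (n : nat) (w : 'S_n) (y : 'rV[rat]_n) : 'rV[rat]_n :=
  \row_(j < n) y ord0 (w^-1 j)%g.

Definition in_conv_orbit (n : nat) (lam x : 'rV[rat]_n) : Prop :=
  exists c : 'S_n -> rat, (forall w, 0 <= c w) /\ \sum_(w : 'S_n) c w = 1 /\
    x = \sum_(w : 'S_n) c w *: Wact w lam.

Definition inM (n : nat) (lam x : 'rV[rat]_n) : Prop :=
  in_conv_orbit lam x /\ in_root_lattice (x - lam).

Definition has_triple (n : nat) (x : 'rV[rat]_n) : Prop :=
  exists (i j k : 'I_n) (alpha : rat), [/\ i != j, j != k & i != k] /\
    [/\ x ord0 i = alpha + 1, x ord0 j = alpha & x ord0 k = alpha - 1].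

Definition lam_first (n : nat) : 'rV[rat]_n :=
  \row_(j < n) (if val j == 0%N then (2 * n%:R - 2) / n%:R else - (2 / n%:R)).

Definition lam_last (n : nat) : 'rV[rat]_n :=
  \row_(j < n) (if val j == n.-1 then - ((2 * n%:R - 2) / n%:R) else 2 / n%:R).

From HB Require Import structures.
From mathcomp Require Import all_boot all_order all_fingroup all_algebra.
From mathcomp Require Import ring lra.
Import Order.TTheory GRing.Theory Num.Theory.
Local Open Scope ring_scope.
Set Implicit Arguments. Unset Strict Implicit. Unset Printing Implicit Defensive.

(* Points of M(lam) are produced by transfers: moving an integer amount d, lying
   between 0 and x_i - x_j, from coordinate i to coordinate j of x is the convex
   combination t (x with x_i, x_j swapped) + (1 - t) x with t = d / (x_i - x_j).  It
   keeps the integrality of the offsets from lam and the coordinate sum, so it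
   preserves reachability from lam, and reachable points lie in M(lam).

   For a weight all coordinates are congruent mod Z and sum to 0, and |lam_i| > 1
   forces lam_1 - lam_n >= 2 (spread_ge2).  Write lam_1 >= lam_2 >= lam_{n-1} >= lam_n.
   Moving d in {0, 1, 2} from lam_1 to lam_n, with d chosen mod 3, balances
   (lam_1, lam_2, lam_{n-1}) unless lam_2 = lam_{n-1} and lam_1 - lam_2 <= 2, and
   balances (lam_n, lam_2, lam_{n-1}) if moreover lam_2 - lam_n > 2.  In the nine
   remaining configurations a triple is found directly, except in the two
   exceptional ones. *)

Lemma conv_orbit_refl n (lam : 'rV[rat]_n) : in_conv_orbit lam lam.
Proof.
exists (fun w => (w == 1%g)%:R); split; first by move=> w; rewrite ler0n.
split; first by rewrite (bigD1 1%g) //= eqxx big1 ?addr0 // => w /negbTE ->.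
rewrite (bigD1 1%g) //= eqxx scale1r big1 ?addr0.
  by apply/rowP=> j; rewrite mxE invg1 perm1.
by move=> w /negbTE ->; rewrite scale0r.
Qed.

Lemma conv_orbit_mix n (lam x y : 'rV[rat]_n) (t : rat) :
  in_conv_orbit lam x -> in_conv_orbit lam y -> 0 <= t <= 1 ->
  in_conv_orbit lam (t *: x + (1 - t) *: y).
Proof.
move=> [c1 [c1_ge0 [c1_sum ->]]] [c2 [c2_ge0 [c2_sum ->]]] /andP[t_ge0 t_le1].
exists (fun w => t * c1 w + (1 - t) * c2 w); split.
  by move=> w; rewrite addr_ge0 ?mulr_ge0 ?subr_ge0.
split; first by rewrite big_split /= -!mulr_sumr c1_sum c2_sum !mulr1 addrC subrK.
rewrite !scaler_sumr -big_split /=; apply: eq_bigr => w _.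
by rewrite !scalerA -scalerDl.
Qed.

Lemma Wact_mul n (s w : 'S_n) (x : 'rV[rat]_n) :
  Wact s (Wact w x) = Wact (w * s)%g x.
Proof. by apply/rowP=> j; rewrite !mxE invMg permM. Qed.

Lemma Wact_sum n (s : 'S_n) (c : 'S_n -> rat) (F : 'S_n -> 'rV[rat]_n) :
  Wact s (\sum_w c w *: F w) = \sum_w c w *: Wact s (F w).
Proof. by apply/rowP=> j; rewrite !mxE !summxE; apply: eq_bigr => w _; rewrite !mxE. Qed.

Lemma conv_orbit_perm n (lam x : 'rV[rat]_n) (s : 'S_n) :
  in_conv_orbit lam x -> in_conv_orbit lam (Wact s x).
Proof.
move=> [c [c_ge0 [c_sum ->]]].
exists (fun v => c (v * s^-1)%g); split; first by move=> v; apply: c_ge0.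
split.
  by rewrite -c_sum (reindex_inj (mulIg s)) /=; apply: eq_bigr => w _; rewrite mulgK.
rewrite Wact_sum [RHS](reindex_inj (mulIg s)) /=; apply: eq_bigr => w _.
by rewrite Wact_mul mulgK.
Qed.

Lemma ebasis_comb n (c : 'I_n -> rat) l :
  (\sum_i c i *: ebasis i) ord0 l = c l - (\sum_i c i) / n%:R.
Proof.
rewrite summxE; under eq_bigr => i _ do rewrite !mxE mulrBr.
rewrite sumrB -mulr_suml; congr (_ - _).
by rewrite (bigD1 l) //= eqxx mulr1 big1 ?addr0 // => i /negbTE ->; rewrite mulr0.
Qed.

Definition int_spaced n (x : 'rV[rat]_n) : Prop :=
  forall l l', x ord0 l - x ord0 l' \is a Num.int.

Lemma weight_int_spaced n (lam : 'rV[rat]_n) : is_weight lam -> int_spaced lam.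
Proof.
move=> [b ->] l l'; rewrite !ebasis_comb.
have -> : forall u v w : rat, (u - w) - (v - w) = u - v by move=> u v w; ring.
by rewrite rpredB ?intr_int.
Qed.

Lemma weight_sum n (lam : 'rV[rat]_n) : (0 < n)%N -> is_weight lam ->
  \sum_l lam ord0 l = 0.
Proof.
move=> n_gt0 [b ->]; under eq_bigr => l _ do rewrite ebasis_comb.
rewrite sumrB sumr_const card_ord -[X in _ - X]mulr_natr divfK ?subrr //.
by rewrite pnatr_eq0 -lt0n.
Qed.

Definition transfer n (x : 'rV[rat]_n) (i j : 'I_n) (d : rat) : 'rV[rat]_n :=
  \row_l (x ord0 l + d * ((l == j)%:R - (l == i)%:R)).

Section Transfer.
Variables (n : nat) (x : 'rV[rat]_n) (i j : 'I_n) (d : rat).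
Hypothesis i_neq_j : i != j.

Lemma transfer_src : transfer x i j d ord0 i = x ord0 i - d.
Proof. by rewrite mxE eqxx (negbTE i_neq_j) /=; ring. Qed.

Lemma transfer_dst : transfer x i j d ord0 j = x ord0 j + d.
Proof. by rewrite mxE eqxx eq_sym (negbTE i_neq_j) /=; ring. Qed.

Lemma transfer_other l : l != i -> l != j -> transfer x i j d ord0 l = x ord0 l.
Proof. by move=> /negbTE li /negbTE lj; rewrite mxE li lj /=; ring. Qed.

End Transfer.

Lemma transfer_sum n (x : 'rV[rat]_n) i j d :
  \sum_l transfer x i j d ord0 l = \sum_l x ord0 l.
Proof.
have sum_delta (k : 'I_n) : \sum_l ((l == k)%:R : rat) = 1.
  by rewrite (bigD1 k) //= eqxx big1 ?addr0 // => l /negbTE ->.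
under eq_bigr => l _ do rewrite mxE.
by rewrite big_split /= -mulr_sumr sumrB !sum_delta subrr mulr0 addr0.
Qed.

Lemma transfer_mix n (x : 'rV[rat]_n) i j d : x ord0 i != x ord0 j ->
  let t := d / (x ord0 i - x ord0 j) in
  transfer x i j d = t *: Wact (tperm i j) x + (1 - t) *: x.
Proof.
move=> xij t; have t_def : t * (x ord0 i - x ord0 j) = d by rewrite divfK // subr_eq0.
have /negbTE i_neq_j : i != j by apply: contraNneq xij => ->.
apply/rowP => l; rewrite !mxE tpermV -t_def.
case: tpermP => [->|->|/eqP/negbTE -> /eqP/negbTE ->].
- by rewrite eqxx i_neq_j /=; ring.
- by rewrite eqxx eq_sym i_neq_j /=; ring.
- by rewrite /=; ring.
Qed.

Definition reachable n (lam x : 'rV[rat]_n) : Prop :=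
  [/\ in_conv_orbit lam x, forall l, x ord0 l - lam ord0 l \is a Num.int &
      \sum_l x ord0 l = \sum_l lam ord0 l].

Lemma reachable_refl n (lam : 'rV[rat]_n) : reachable lam lam.
Proof. by split=> [|l|//]; [exact: conv_orbit_refl | rewrite subrr rpred0]. Qed.

Lemma reachable_transfer n (lam x : 'rV[rat]_n) i j d :
  reachable lam x -> i != j -> d \is a Num.int ->
  (0 <= d <= x ord0 i - x ord0 j) || (x ord0 i - x ord0 j <= d <= 0) ->
  reachable lam (transfer x i j d).
Proof.
move=> [conv_x int_x sum_x] i_neq_j d_int d_between; split.
- have [e|xij] := eqVneq (x ord0 i) (x ord0 j).
    have d0 : d = 0 by move: d_between; rewrite e subrr; case/orP=> /andP[? ?]; lra.
    suff -> : transfer x i j d = x by [].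
    by apply/rowP => l; rewrite !mxE d0 mul0r addr0.
  rewrite transfer_mix //; apply: conv_orbit_mix => //; first exact: conv_orbit_perm.
  have D_neq0 : x ord0 i - x ord0 j != 0 by rewrite subr_eq0.
  case/orP: d_between => /andP[d_lo d_hi].
  + have D_gt0 : 0 < x ord0 i - x ord0 j by rewrite lt_def D_neq0 (le_trans d_lo d_hi).
    by rewrite divr_ge0 ?(ltW D_gt0) //= ler_pdivrMr // mul1r.
  + have D_lt0 : x ord0 i - x ord0 j < 0 by rewrite lt_def eq_sym D_neq0 (le_trans d_lo d_hi).
    rewrite -mulrNN -invrN divr_ge0 ?oppr_ge0 ?(ltW D_lt0) //=.
    by rewrite ler_pdivrMr ?oppr_gt0 // mul1r lerN2.
- move=> l; rewrite mxE addrAC rpredD // rpredM //.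
  by rewrite rpredB // natr_int.
- by rewrite transfer_sum.
Qed.

Lemma reachable_unit_transfer n (lam : 'rV[rat]_n) (i j : 'I_n) :
  i != j -> lam ord0 j + 1 <= lam ord0 i -> reachable lam (transfer lam i j 1).
Proof.
move=> i_neq_j gap; apply: reachable_transfer (reachable_refl _) i_neq_j (rpred1 _) _.
by apply/orP; left; rewrite ler01 /=; lra.
Qed.

(* Reachable points lie in M(lam): the integral offsets sum to 0, so they form an element of
   the root lattice. *)
Lemma reachable_inM n (lam x : 'rV[rat]_n) : reachable lam x -> inM lam x.
Proof.
move=> [conv_x int_x sum_x]; split=> //.
pose a l := Num.floor (x ord0 l - lam ord0 l).
have a_val l : (a l)%:~R = x ord0 l - lam ord0 l by rewrite floorK.
have sum_a : \sum_l ((a l)%:~R : rat) = 0.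
  by under eq_bigr => l _ do rewrite a_val; rewrite sumrB sum_x subrr.
exists a; split.
  have /eqP : (\sum_l a l)%:~R = 0 :> rat by rewrite rmorph_sum.
  by rewrite intr_eq0 => /eqP ->; rewrite dvdz0.
by apply/rowP => l; rewrite ebasis_comb sum_a mul0r subr0 a_val !mxE.
Qed.

Lemma reachable_int_spaced n (lam x : 'rV[rat]_n) :
  int_spaced lam -> reachable lam x -> int_spaced x.
Proof.
move=> lam_sp [_ int_x _] l l'.
have -> : x ord0 l - x ord0 l' =
    (x ord0 l - lam ord0 l) - (x ord0 l' - lam ord0 l') + (lam ord0 l - lam ord0 l').
  by ring.
by apply: rpredD; [apply: rpredB; exact: int_x | exact: lam_sp].
Qed.

Lemma int_spaced_coset n (y : 'rV[rat]_n) (k : 'I_n) (a : rat) :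
  int_spaced y -> y ord0 k - a \is a Num.int -> forall l, y ord0 l - a \is a Num.int.
Proof.
move=> y_sp yk_a l; have -> : y ord0 l - a = (y ord0 l - y ord0 k) + (y ord0 k - a) by ring.
exact: rpredD.
Qed.

Lemma int_gap (u v : rat) : u - v \is a Num.int -> v < u -> v + 1 <= u.
Proof.
move=> /intrP[z e] lt_vu; have z_gt0 : 0 < z by rewrite -(ltr0z rat) -e subr_gt0.
by rewrite -lerBrDl e ler1z -gtz0_ge1.
Qed.

Lemma int_mod3 (s : rat) : s \is a Num.int ->
  exists d q : rat,
    [/\ d \is a Num.int, 0 <= d, d <= 2, q \is a Num.int & s = d + q * 3].
Proof.
move=> /intrP[z ->]; exists (z %% 3)%Z%:~R, (z %/ 3)%Z%:~R; split; rewrite ?intr_int //.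
- by rewrite ler0z modz_ge0.
- by rewrite -[2]/((2 : int)%:~R) ler_int -ltzD1 ltz_pmod.
- by rewrite {1}(divz_eq z 3) intrD intrM addrC.
Qed.

Lemma int_le2 (q : rat) : q \is a Num.int -> 0 <= q -> q <= 2 -> [\/ q = 0, q = 1 | q = 2].
Proof.
move=> /intrP[z ->]; rewrite ler0z -[2]/((2 : int)%:~R) ler_int.
by case: z => [[|[|[|k]]]|k] //= _ _; [constructor 1 | constructor 2 | constructor 3].
Qed.

(* Two transfers within coordinates i, j, k with x_i > a > x_k and sum 3a produce
   a + 1, a, a - 1: first lower x_i to a + 1, then move x_j - a between j and k. *)
Lemma triple_from_spread n (lam x : 'rV[rat]_n) (i j k : 'I_n) (a : rat) :
  reachable lam x -> [/\ i != j, j != k & i != k] ->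
  (forall l, x ord0 l - a \is a Num.int) ->
  a < x ord0 i -> x ord0 k < a -> x ord0 i + x ord0 j + x ord0 k = a * 3 ->
  exists y, reachable lam y /\ has_triple y.
Proof.
move=> rx [ij jk ik] x_a a_xi xk_a sum3.
have xi_ge := int_gap (x_a i) a_xi.
have xk_le : x ord0 k + 1 <= a by apply: int_gap xk_a; rewrite -opprB rpredN x_a.
set y := transfer x i k (x ord0 i - a - 1).
have y_i : y ord0 i = a + 1 by rewrite transfer_src //; ring.
have y_j : y ord0 j = x ord0 j by rewrite transfer_other // eq_sym.
have y_k : y ord0 k = a + a - 1 - x ord0 j by rewrite transfer_dst //; lra.
have ry : reachable lam y.
  apply: reachable_transfer => //; first exact: rpredB (x_a i) (rpred1 _).
  by apply/orP; left; lra.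
set z := transfer y j k (x ord0 j - a).
have rz : reachable lam z.
  apply: reachable_transfer => //; rewrite y_j y_k.
  have [a_xj|xj_a] := lerP a (x ord0 j); apply/orP; [by left; lra | right].
  have : x ord0 j + 1 <= a by apply: int_gap xj_a; rewrite -opprB rpredN x_a.
  lra.
exists z; split=> //; exists i, j, k, a; split=> //; split.
- by rewrite transfer_other ?y_i // eq_sym.
- by rewrite transfer_src // y_j; ring.
- by rewrite transfer_dst // y_k; ring.
Qed.

(* Key lemma: a non-constant triple of coordinates in a + Z with mean a can be made
   arithmetic.  Some coordinate lies above a and another below a; reduce to the spread case. *)
Lemma triple_from_balanced n (lam x : 'rV[rat]_n) (i j k : 'I_n) (a : rat) :
  reachable lam x -> [/\ i != j, j != k & i != k] ->
  (forall l, x ord0 l - a \is a Num.int) ->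
  x ord0 i + x ord0 j + x ord0 k = a * 3 ->
  ~ (x ord0 i = x ord0 j /\ x ord0 j = x ord0 k) ->
  exists y, reachable lam y /\ has_triple y.
Proof.
move=> rx dist x_a.
wlog a_xi : i j k dist / a < x ord0 i => [above sum3 not_eq | sum3 _].
  have [a_xi|xi_a] := ltrP a (x ord0 i); first exact: above a_xi sum3 not_eq.
  case: dist => ij jk ik.
  have [a_xj|xj_a] := ltrP a (x ord0 j).
    apply: (above j i k _ a_xj); [by split; rewrite // eq_sym | lra |].
    by move=> [e1 e2]; apply: not_eq; split; lra.
  have [a_xk|xk_a] := ltrP a (x ord0 k).
    apply: (above k j i _ a_xk); [by split; rewrite // eq_sym | lra |].
    by move=> [e1 e2]; apply: not_eq; split; lra.
  by case: not_eq; split; lra.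
case: dist => ij jk ik.
have [xk_a|a_xk] := ltrP (x ord0 k) a; first exact: triple_from_spread sum3.
have xj_a : x ord0 j < a by lra.
apply: (triple_from_spread (j := k) rx _ x_a a_xi xj_a); last by lra.
by split; rewrite // eq_sym.
Qed.

Lemma spike_offset n (x : 'rV[rat]_n) (p : 'I_n) (c s : rat) :
  (forall l, x ord0 l = c + s * (l == p)%:R) -> \sum_l x ord0 l = 0 -> c = - (s / n%:R).
Proof.
move=> x_val sum0.
have n_neq0 : n%:R != 0 :> rat by rewrite pnatr_eq0 -lt0n (leq_ltn_trans _ (ltn_ord p)).
have : c * n%:R + s = 0.
  rewrite -sum0; under [RHS]eq_bigr => l _ do rewrite x_val.
  rewrite big_split /= sumr_const card_ord -mulr_sumr mulr_natr (bigD1 p) //= eqxx.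
  by rewrite big1 ?addr0 ?mulr1 // => l /negbTE ->.
by move/eqP; rewrite addr_eq0 => /eqP cn; rewrite -mulNr -cn mulfK.
Qed.

(* A dominant vector with sum 0 and a coordinate of absolute value > 1 has spread > 1,
   hence >= 2 when its coordinates are congruent modulo Z. *)
Lemma spread_ge2 n (lam : 'rV[rat]_n.+1) : int_spaced lam -> dominant lam ->
  \sum_l lam ord0 l = 0 -> (exists i, 1 < `|lam ord0 i|) ->
  lam ord0 ord_max + 2 <= lam ord0 ord0.
Proof.
move=> lam_sp lam_dom sum0 [i big_i].
have le_top l : lam ord0 l <= lam ord0 ord0 := lam_dom ord0 l (leq0n _).
have ge_bot l : lam ord0 ord_max <= lam ord0 l := lam_dom l ord_max (leq_ord l).
have top_ge0 : 0 <= lam ord0 ord0.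
  have : \sum_l lam ord0 l <= \sum_(l < n.+1) lam ord0 ord0 by apply: ler_sum.
  by rewrite sum0 sumr_const card_ord pmulrn_lge0.
have bot_le0 : lam ord0 ord_max <= 0.
  have : \sum_(l < n.+1) lam ord0 ord_max <= \sum_l lam ord0 l by apply: ler_sum.
  by rewrite sum0 sumr_const card_ord pmulrn_lle0.
have : 1 < lam ord0 ord0 - lam ord0 ord_max.
  move: big_i (le_top i) (ge_bot i); rewrite ltr_normr => /orP[] ? ? ?; lra.
move=> /(int_gap (rpredB (lam_sp _ _) (rpred1 _))); lra.
Qed.

Definition second m : 'I_m.+4 := Ordinal (isT : (1 < m.+4)%N).
Definition penult m : 'I_m.+4 := Ordinal (leqnSn m.+3).

Section FourCoordinates.
Variables (m : nat) (lam : 'rV[rat]_m.+4).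
Hypotheses (lam_sp : int_spaced lam) (lam_dom : dominant lam).

Local Notation i0 := (@ord0 m.+3).
Local Notation i1 := (second m).
Local Notation i2 := (penult m).
Local Notation i3 := (@ord_max m.+3).
Local Notation L i := (lam ord0 i).

Lemma penult_neq_last : i2 != i3.
Proof. by rewrite -val_eqE /= ltn_eqF. Qed.

Lemma last_neq_penult : i3 != i2.
Proof. by rewrite eq_sym penult_neq_last. Qed.

(* Distinctness of the four indices is decided by computation, except for these two. *)
#[local] Hint Resolve penult_neq_last last_neq_penult : core.

Lemma reachable_first_triple (y : 'rV[rat]_m.+4) (a : rat) :
  reachable lam y -> y ord0 i0 = a + 1 -> y ord0 i1 = a -> y ord0 i3 = a - 1 ->
  exists y, reachable lam y /\ has_triple y.
Proof. by move=> ry y0 y1 y3; exists y; split=> //; exists i0, i1, i3, a. Qed.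

Lemma dominant_chain : [/\ L i1 <= L i0, L i2 <= L i1 & L i3 <= L i2].
Proof. by split; apply: lam_dom => //=; rewrite leqnSn. Qed.

(* Unless lam_2 = lam_{n-1} and lam_1 - lam_2 <= 2: move d = (lam_1 + lam_2 - 2 lam_{n-1}) mod 3
   from lam_1 to lam_n; then lam_1 - d, lam_2, lam_{n-1} is a balanced, non-constant triple. *)
Lemma triple_unless_flat_top : L i3 + 2 <= L i0 -> L i1 != L i2 \/ L i1 + 2 < L i0 ->
  exists y, reachable lam y /\ has_triple y.
Proof.
move=> spread.
have [d [q [d_int d_ge0 d_le2 q_int s_eq]]] :=
  int_mod3 (rpredD (lam_sp i0 i2) (lam_sp i1 i2)).
set y := transfer lam i0 i3 d.
have ry : reachable lam y.
  apply: reachable_transfer (reachable_refl _) _ d_int _ => //.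
  by apply/orP; left; rewrite d_ge0 /=; lra.
have y0 : y ord0 i0 = L i0 - d by rewrite transfer_src.
have y1 : y ord0 i1 = L i1 by rewrite transfer_other.
have y2 : y ord0 i2 = L i2 by rewrite transfer_other.
have y_sum : y ord0 i0 + y ord0 i1 + y ord0 i2 = (L i2 + q) * 3 by rewrite y0 y1 y2; lra.
move=> not_flat; apply: (triple_from_balanced _ _ _ y_sum) => //.
- apply: (int_spaced_coset (k := i2)); first exact: reachable_int_spaced ry.
  by rewrite y2 opprD addrA subrr sub0r rpredN.
- rewrite y0 y1 y2 => -[e01 e12]; case: not_flat => [/eqP|]; [done | lra].
Qed.

(* If lam_2 = lam_{n-1} and lam_2 - lam_n > 2: move d = (lam_2 - lam_n) mod 3 from lam_1
   to lam_n; then lam_n + d, lam_2, lam_{n-1} is a balanced, non-constant triple. *)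
Lemma triple_unless_flat_bottom : L i1 = L i2 -> L i3 + 2 < L i1 ->
  exists y, reachable lam y /\ has_triple y.
Proof.
move=> flat steep; have [d01 _ _] := dominant_chain.
have [d [q [d_int d_ge0 d_le2 q_int s_eq]]] := int_mod3 (lam_sp i1 i3).
set y := transfer lam i0 i3 d.
have ry : reachable lam y.
  apply: reachable_transfer (reachable_refl _) _ d_int _ => //.
  by apply/orP; left; rewrite d_ge0 /=; lra.
have y1 : y ord0 i1 = L i1 by rewrite transfer_other.
have y2 : y ord0 i2 = L i2 by rewrite transfer_other.
have y3 : y ord0 i3 = L i3 + d by rewrite transfer_dst.
have y_sum : y ord0 i3 + y ord0 i1 + y ord0 i2 = (L i1 - q) * 3 by rewrite y1 y2 y3; lra.
apply: (triple_from_balanced _ _ _ y_sum) => //.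
- apply: (int_spaced_coset (k := i1)); first exact: reachable_int_spaced ry.
  by rewrite y1 opprB addrC subrK.
- by rewrite y1 y3 => -[e31 _]; lra.
Qed.

Lemma exceptional_first : \sum_l L l = 0 -> L i1 = L i3 -> L i0 = L i1 + 2 ->
  lam = lam_first m.+4.
Proof.
move=> sum0 flat top.
have lam_val l : L l = L i1 + 2 * (l == i0)%:R.
  have [->|l_neq0] := eqVneq l i0; first by rewrite top /=; ring.
  rewrite /= mulr0 addr0; apply/eqP; rewrite eq_le; apply/andP; split.
    by apply: lam_dom; rewrite lt0n.
  by rewrite {1}flat; apply: lam_dom; exact: leq_ord.
have c_eq := spike_offset lam_val sum0.
apply/rowP => l; rewrite mxE lam_val c_eq.
have -> : (val l == 0%N) = (l == i0) by rewrite -val_eqE.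
by case: (l == i0) => /=; [field; rewrite -natrD pnatr_eq0 | ring].
Qed.

Lemma exceptional_last : \sum_l L l = 0 -> L i0 = L i2 -> L i3 + 2 = L i2 ->
  lam = lam_last m.+4.
Proof.
move=> sum0 flat bot.
have lam_val l : L l = L i2 + (- 2) * (l == i3)%:R.
  have [->|l_neq3] := eqVneq l i3; first by rewrite -bot /=; ring.
  rewrite /= mulr0 addr0; apply/eqP; rewrite eq_le; apply/andP; split.
    by rewrite -flat; apply: lam_dom.
  by apply: lam_dom; rewrite -ltnS ltn_neqAle leq_ord andbT.
have c_eq := spike_offset lam_val sum0.
apply/rowP => l; rewrite mxE lam_val c_eq.
have -> : (val l == m.+3) = (l == i3) by rewrite -val_eqE.
by case: (l == i3) => /=; [field; rewrite -natrD pnatr_eq0 | ring].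
Qed.

(* The flat case lam_2 = lam_{n-1}, with lam_1 - lam_2 = p and lam_2 - lam_n = q in
   {0, 1, 2}, p + q >= 2: (0, 2) and (2, 0) are exceptional, (1, 1) is a triple, and
   otherwise one unit transfer creates the triple lam_2 + 1, lam_2, lam_2 - 1 at i0, i1, i3. *)
Lemma triple_or_exceptional_flat :
  \sum_l L l = 0 -> L i3 + 2 <= L i0 -> L i1 = L i2 ->
  L i0 <= L i1 + 2 -> L i1 <= L i3 + 2 ->
  (exists y, reachable lam y /\ has_triple y) \/ lam = lam_first m.+4 \/ lam = lam_last m.+4.
Proof.
move=> sum0 spread flat top bot; have [d01 _ d23] := dominant_chain.
have [p0|p1|p2] := int_le2 (lam_sp i0 i1) (ltac:(lra)) (ltac:(lra));
have [q0|q1|q2] := int_le2 (lam_sp i1 i3) (ltac:(lra)) (ltac:(lra)).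
- by exfalso; lra.
- by exfalso; lra.
- by right; right; apply: exceptional_last; lra.
- by exfalso; lra.
- by left; apply: (reachable_first_triple (a := L i1) (reachable_refl lam)); lra.
- left; apply: (reachable_first_triple (a := L i1)
      (reachable_unit_transfer (i := i2) (j := i3) _ _));
    by rewrite ?transfer_dst ?transfer_other //; lra.
- by right; left; apply: exceptional_first; lra.
- left; apply: (reachable_first_triple (a := L i1)
      (reachable_unit_transfer (i := i0) (j := i2) _ _));
    by rewrite ?transfer_src ?transfer_other //; lra.
- left; apply: (reachable_first_triple (a := L i1)
      (reachable_unit_transfer (i := i0) (j := i3) _ _));
    by rewrite ?transfer_src ?transfer_dst ?transfer_other //; lra.
Qed.

Lemma triple_or_exceptional : \sum_l L l = 0 -> L i3 + 2 <= L i0 ->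
  (exists y, reachable lam y /\ has_triple y) \/ lam = lam_first m.+4 \/ lam = lam_last m.+4.
Proof.
move=> sum0 spread.
have [flat|not_flat] := eqVneq (L i1) (L i2); last first.
  by left; apply: triple_unless_flat_top => //; left.
have [top|steep_top] := lerP (L i0) (L i1 + 2); last first.
  by left; apply: triple_unless_flat_top => //; right.
have [bot|steep_bot] := lerP (L i1) (L i3 + 2); last first.
  by left; apply: triple_unless_flat_bottom.
exact: triple_or_exceptional_flat.
Qed.

End FourCoordinates.

Unset Implicit Arguments.

Theorem lemma10 (n : nat) (lam : 'rV[rat]_n) :
  (4 <= n)%N ->
  is_weight lam ->
  dominant lam ->
  (forall i : 'I_n, ~ exists z : int, lam ord0 i = z%:~R) ->
  (exists i : 'I_n, 1 < `|lam ord0 i|) ->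
  ~ (exists x : 'rV[rat]_n, inM lam x /\ has_triple x) ->
  lam = lam_first n \/ lam = lam_last n.
Proof.
case: n lam => [|[|[|[|m]]]] lam //= _ lam_wt lam_dom _ lam_big no_triple.
have lam_sp := weight_int_spaced lam_wt.
have lam_sum := weight_sum (ltn0Sn _) lam_wt.
have := triple_or_exceptional lam_sp lam_dom lam_sum (spread_ge2 lam_sp lam_dom lam_sum lam_big).
case=> [[y [ry y_triple]]|//]; case: no_triple.
by exists y; split=> //; exact: reachable_inM.
Qed.
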